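(* There exists a measure-preserving transformation $T:[0,1]\to[0,1]$, generated by a network with task-driven neurons, and a point $\xi\in[0,1]$ such that the orbit $\{T^n(\xi): n\in\mathbb{N}\}$ is dense in $[0,1]$. Equivalently, for every $x\in[0,1]$ and every $\epsilon>0$ there exists $m\in\mathbb{N}$ with \[ |x - T^{m}(\xi)| < \epsilon . \]
   Context: $T^m$ denotes the $m$-fold composition of $T$ with itself. A task-driven neuron with input $\mathbf{z}\in\mathbb{R}^d$ computes $y=\sigma(g(\mathbf{z}))$, where $\sigma$ is a common activation function (e.g. ReLU) and the aggregation function $g$ replaces the usual inner product $\mathbf{w}^\top\mathbf{z}+b$ by a nonlinear expression with learnable coefficients built from polynomial terms $\mathbf{w}_k^\top \mathbf{z}^{\odot k}$ (element-wise powers), interaction terms $\sum_{r=1}^R\prod_{j=1}^m(\mathbf{a}_{r,j}^\top\mathbf{z})$, and possibly a periodic term $D\sin(\mathbf{z})$, plus a bias; in particular a neuron may have a polynomial of any order as its aggregation function. A network with task-driven neurons is a feedforward network built from such neurons. Measure-preserving is with respect to Lebesgue measure on $[0,1]$. *)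

From HB Require Import structures.
From mathcomp Require Import all_boot all_order all_algebra.
From mathcomp Require Import all_classical all_reals all_analysis.
Set Implicit Arguments. Unset Strict Implicit. Unset Printing Implicit Defensive.
Import Order.TTheory GRing.Theory Num.Theory.
Local Open Scope classical_set_scope.
Local Open Scope ring_scope.

Section TaskDriven.
Variable R : realType.

Inductive activation := act_relu | act_identity.

Definition act_eval (s : activation) (t : R) : R :=
  match s with act_relu => Num.max t 0 | act_identity => t end.

(* A task-driven neuron with input z in R^d (vectors as 'I_d -> R):
   y = sigma(g(z)),
   g(z) = sum_{k=1}^{K} w_k^T z^{.k}
        + sum_{r<Rn} prod_{j<m} (a_{r,j}^T z)
        + D sin(z) + b. *)
Record neuron (d : nat) := Neuron {
  n_act : activation;
  n_K : nat;
  n_w : nat -> 'I_d -> R;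
  n_R : nat;
  n_m : nat;
  n_a : nat -> nat -> 'I_d -> R;
  n_D : 'I_d -> R;
  n_b : R
}.

Definition aggregation d (n : neuron d) (z : 'I_d -> R) : R :=
  \sum_(1 <= k < (n_K n).+1) \sum_(i < d) n_w n k i * z i ^+ k
  + \sum_(r < n_R n) \prod_(j < n_m n) (\sum_(i < d) n_a n r j i * z i)
  + \sum_(i < d) n_D n i * sin (z i)
  + n_b n.

Definition neuron_eval d (n : neuron d) (z : 'I_d -> R) : R :=
  act_eval (n_act n) (aggregation n z).

Inductive network : nat -> nat -> Type :=
| NLast d e : ('I_e -> neuron d) -> network d e
| NLayer d e f : ('I_e -> neuron d) -> network e f -> network d f.

Fixpoint net_eval d e (N : network d e) : ('I_d -> R) -> ('I_e -> R) :=
  match N in network d e return ('I_d -> R) -> ('I_e -> R) with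
  | NLast _ _ L => fun z o => neuron_eval (L o) z
  | NLayer _ _ _ L N' => fun z => net_eval N' (fun o => neuron_eval (L o) z)
  end.

Definition net_map (N : network 1 1) (x : R) : R := net_eval N (fun _ => x) ord0.

Definition I01 : set R := `[0%R, 1%R].

Definition measure_preserving01 (T : R -> R) : Prop :=
  measurable_fun I01 T /\
  forall A : set R, measurable A -> A `<=` I01 ->
    (@lebesgue_measure R) (I01 `&` T @^-1` A) = (@lebesgue_measure R) A.

End TaskDriven.

(* The tent map T x = min (2 x, 2 - 2 x) is computed by one hidden layer of
   ReLU neurons.  Its iterate T^n maps every dyadic cell [j/2^n, (j+1)/2^n]
   affinely onto [0, 1], so every subinterval of [0, 1] contains a smaller one
   that some iterate maps into any prescribed target interval.  Refining a
   nested sequence of intervals against an enumeration of all dyadic cells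
   yields a point whose orbit meets every cell, hence is dense.  T preserves
   Lebesgue measure on [0, 1] because the preimage of [0, c] is
   [0, c/2] U [1 - c/2, 1], and two measures on R that agree and are finite on
   all rays ]-oo, c] agree on every Borel set. *)

From mathcomp Require Import all_boot all_order all_algebra.
From mathcomp Require Import all_classical all_reals all_analysis.
From mathcomp Require Import ring lra zify measurable_realfun.
Import Order.TTheory GRing.Theory Num.Theory.
Set Implicit Arguments. Unset Strict Implicit. Unset Printing Implicit Defensive.
Local Open Scope classical_set_scope.
Local Open Scope ring_scope.

Lemma nested_itv_common_point (R : realType) (lo hi : nat -> R) :
  (forall k, lo k <= lo k.+1) -> (forall k, hi k.+1 <= hi k) ->
  (forall k, lo k <= hi k) ->
  exists x, forall k, lo k <= x <= hi k.
Proof.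
move=> /nondecreasing_seqP lo_up /nonincreasing_seqP hi_down lo_hi.
have lo_le_hi i k : lo i <= hi k.
  apply: le_trans (lo_up _ _ (leq_maxl i k)) _.
  exact: le_trans (lo_hi _) (hi_down _ _ (leq_maxr i k)).
have lo_ub : has_ubound (range lo).
  by exists (hi 0%N) => _ [i _ <-]; exact: lo_le_hi.
exists (sup (range lo)) => k; apply/andP; split.
  by apply: ub_le_sup => //; exists k.
apply: ge_sup; first by exists (lo 0%N), 0%N.
by move=> _ [i _ <-]; exact: lo_le_hi.
Qed.

Lemma dyadic_cell (R : realType) (p : nat) (x : R) : 0 <= x <= 1 ->
  exists2 j, (j < 2 ^ p)%N & j%:R <= x * 2 ^+ p <= j%:R + 1.
Proof.
move=> /andP[x0]; rewrite le_eqVlt => /predU1P[->|x1].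
  exists (2 ^ p).-1; first by rewrite prednK ?expn_gt0.
  by rewrite mul1r natr1 prednK ?expn_gt0 // natrX lexx andbT -natrX ler_nat leq_pred.
have P0 : (0 : R) < 2 ^+ p by rewrite exprn_gt0.
have xP0 : 0 <= x * 2 ^+ p by rewrite mulr_ge0 // ltW.
have /andP[j_le j_gt] := truncn_itv xP0.
exists (Num.truncn (x * 2 ^+ p)); last by rewrite j_le natr1 ltW.
rewrite -(ltr_nat R) natrX (le_lt_trans j_le) // -[ltRHS]mul1r.
by rewrite ltr_pM2r.
Qed.

Section transitive_orbit.
Variable R : realType.

Definition subitv01 (a b : R) : Prop := [/\ 0 <= a, a < b & b <= 1].

Definition itv_transitive01 (T : R -> R) : Prop :=
  forall a b c d, subitv01 a b -> subitv01 c d ->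
  exists a' b' m, [/\ subitv01 a' b', a <= a', b' <= b &
    forall y, a' <= y <= b' -> c <= iter m T y <= d].

Variable T : R -> R.
Hypothesis T_transitive : itv_transitive01 T.

Lemma itv_transitive01_orbit_hits (I : countType) (c d : I -> R) :
  (forall i, subitv01 (c i) (d i)) ->
  exists2 xi, 0 <= xi <= 1 & forall i, exists m, c i <= iter m T xi <= d i.
Proof.
move=> cd01.
have /choice[f f_refines] (kab : nat * (R * R)) : exists ab' : R * R,
    subitv01 kab.2.1 kab.2.2 ->
    [/\ subitv01 ab'.1 ab'.2, kab.2.1 <= ab'.1, ab'.2 <= kab.2.2 &
      forall i, unpickle kab.1 = Some i -> exists m,
        forall y, ab'.1 <= y <= ab'.2 -> c i <= iter m T y <= d i].
  case: kab => k [a b] /=; case: (unpickle k) => [i|]; last by exists (a, b).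
  have [ab01|] := pselect (subitv01 a b); last by exists (a, b).
  have [a' [b' [m [ab'01 aa' b'b hit]]]] := T_transitive ab01 (cd01 i).
  by exists (a', b') => _; split=> // _ [<-]; exists m.
pose s := fix s k := if k is k'.+1 then f (k', s k') else (0 : R, 1 : R).
have s01 k : subitv01 (s k).1 (s k).2.
  by elim: k => [|k IH]; [split=> //=; lra | have [] := f_refines (k, s k) IH].
have [xi xi_in] : exists xi, forall k, (s k).1 <= xi <= (s k).2.
  apply: nested_itv_common_point => k.
  - by have [] := f_refines (k, s k) (s01 k).
  - by have [] := f_refines (k, s k) (s01 k).
  - by have [_ /ltW] := s01 k.
exists xi.
  have [/andP[xi0 xi1] [s0 _ s1]] := (xi_in 0%N, s01 0%N).
  by rewrite (le_trans s0 xi0) (le_trans xi1 s1).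
move=> i; have [_ _ _] := f_refines (pickle i, s (pickle i)) (s01 _).
move=> /(_ i (pickleK i))[m hit].
by exists m; apply: hit; apply: xi_in (pickle i).+1.
Qed.

Lemma itv_transitive01_dense_orbit : exists xi, 0 <= xi <= 1 /\
  forall x, 0 <= x <= 1 -> forall eps, 0 < eps ->
    exists m, `|x - iter m T xi| < eps.
Proof.
pose cell := {nj : nat * nat | (nj.2 < 2 ^ nj.1)%N}.
pose lo (nj : cell) : R := (val nj).2%:R / 2 ^+ (val nj).1.
pose hi (nj : cell) : R := (val nj).2.+1%:R / 2 ^+ (val nj).1.
have [|xi xi01 hits] := @itv_transitive01_orbit_hits _ lo hi.
  move=> [[n j] /= jn]; rewrite /lo /hi /=.
  have P0 : (0 : R) < 2 ^+ n by rewrite exprn_gt0.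
  split.
  - by rewrite divr_ge0 // ltW.
  - by rewrite ltr_pM2r ?invr_gt0 // ltr_nat.
  - by rewrite ler_pdivrMr // mul1r -natrX ler_nat.
exists xi; split=> // x x01 eps eps0.
have [p _ /(_ p (leqnn p)) /= p_eps] := near_infty_natSinv_expn_lt (PosNum eps0).
have P0 : (0 : R) < 2 ^+ p by rewrite exprn_gt0.
have [j jp /andP[xj1 xj2]] := dyadic_cell p x01.
have [m] := hits (exist _ (p, j) jp); rewrite /lo /hi /=.
rewrite ler_pdivrMr // ler_pdivlMr // => /andP[yj1 yj2].
have dist : `|x - iter m T xi| * 2 ^+ p <= 1.
  rewrite -[X in _ * X](ger0_norm (ltW P0)) -normrM mulrBl ler_norml.
  by apply/andP; split; lra.
exists m; apply: le_lt_trans p_eps.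
by rewrite ler_pdivlMr.
Qed.

End transitive_orbit.

Section measure_on_rays.
Variable R : realType.
Notation mR := (measurableTypeR R).

Lemma measure_eq_on_rays (mu nu : {measure set mR -> \bar R}) :
  (forall c : R, mu `]-oo, c]%classic = nu `]-oo, c]%classic) ->
  (forall c : R, mu `]-oo, c]%classic \is a fin_num) ->
  forall A, measurable A -> mu A = nu A.
Proof.
move=> munu mufin.
have ray_oc (m : {measure set mR -> \bar R}) a b : a < b ->
    m `]-oo, b]%classic = (m `]-oo, a]%classic + m `]a, b]%classic)%E.
  move=> ab; rewrite (@itv_bndbnd_setU _ _ _ (BRight a)) ?bnd_simp ?ltW //.
  rewrite measureU //; apply/seteqP; split=> x //=.
  by rewrite !in_itv /= => -[xa /andP[ax _]]; move: (lt_le_trans ax xa); rewrite ltxx.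
have oc a b : a < b -> mu `]a, b]%classic = nu `]a, b]%classic.
  move=> ab; have nufin : nu `]-oo, a]%classic \is a fin_num by rewrite -munu.
  rewrite -(addeK (mu `]a, b]%classic) (mufin a)) -(addeK (nu `]a, b]%classic) nufin).
  rewrite (addeC (mu _)) (addeC (nu _)) -(ray_oc mu) // -(ray_oc nu) //.
  by rewrite !munu.
move=> A mA.
pose g k : set mR := `](- k%:R), k%:R]%classic.
apply: (@measure_unique _ R mR (@ocitv R) g _ _ _ _ mu nu _ _ A mA) => //.
- exact: ocitvI.
- by move=> k; exact: is_ocitv.
- apply/seteqP; split=> // x _.
  exists (Num.truncn `|x|).+1 => //; rewrite /g /= in_itv /=.
  have := truncnS_gt `|x|; have := ler_norml x `|x|; rewrite lexx.
  by move=> /esym/andP[x1 x2] x3; apply/andP; split; lra.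
- by move=> _ /ocitvP[->|[[a b] /= ab ->]]; rewrite ?measure0 // oc.
- move=> k; apply: (@le_lt_trans _ _ (mu `]-oo, k%:R]%classic)).
    apply: le_measure; rewrite ?inE /g; try exact: measurable_itv.
    by move=> x /=; rewrite !in_itv /= => /andP[].
  by rewrite ltey_eq mufin.
Qed.

Lemma measure_preimage_eq_on_rays (mu : {measure set mR -> \bar R})
    (f : mR -> mR) : measurable_fun setT f ->
  (forall c : R, mu (f @^-1` `]-oo, c]%classic) = mu `]-oo, c]%classic) ->
  (forall c : R, mu `]-oo, c]%classic \is a fin_num) ->
  forall A, measurable A -> mu (f @^-1` A) = mu A.
Proof.
move=> mf f_rays mufin A mA; apply/esym.
apply: (@measure_eq_on_rays mu (pushforward mu f)) => // c.
exact/esym/f_rays.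
Qed.
Lemma I01_measurable : measurable (@I01 R).
Proof. exact: measurable_itv. Qed.

Lemma lebesgue_measure_itvcc (a b : R) : a <= b ->
  lebesgue_measure `[a, b]%classic = (b - a)%:E.
Proof.
move=> ab; rewrite lebesgue_measure_itv /= lte_fin.
by case: ltgtP ab => // -> _; rewrite subrr.
Qed.

End measure_on_rays.

Section affine_neuron.
Variable R : realType.

Definition affine_neuron d (s : activation) (w : 'I_d -> R) (b : R) : neuron R d :=
  Neuron s 1 (fun _ => w) 0 0 (fun _ _ _ => 0) (fun _ => 0) b.

Lemma affine_neuronE d s (w : 'I_d -> R) b z :
  neuron_eval (affine_neuron s w b) z = act_eval s (\sum_(i < d) w i * z i + b).
Proof.
rewrite /neuron_eval /aggregation /= big_nat1 big_ord0 addr0.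
by rewrite [X in _ + X + b]big1 ?addr0 // => i _; rewrite mul0r.
Qed.
End affine_neuron.

Section tent.
Variable R : realType.

(* min (2 x, 2 - 2 x), written with a single ReLU so that one hidden layer
   computes it. *)
Definition tent (x : R) : R := 2 * x - 4 * Num.max (x - 2^-1) 0.

Lemma tent_le_half x : x <= 2^-1 -> tent x = 2 * x.
Proof. by move=> x_le; rewrite /tent (max_idPr _) ?subr_le0 // mulr0 subr0. Qed.

Lemma tent_ge_half x : 2^-1 <= x -> tent x = 2 - 2 * x.
Proof. by move=> x_ge; rewrite /tent (max_idPl _) ?subr_ge0 //; field. Qed.

Lemma tent_cases x :
  (x <= 2^-1 /\ tent x = 2 * x) \/ (2^-1 <= x /\ tent x = 2 - 2 * x).
Proof.
have [x_le|/ltW x_ge] := lerP x 2^-1.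
  by left; rewrite tent_le_half.
by right; rewrite tent_ge_half.
Qed.

Lemma tent_itv01 x : 0 <= x <= 1 -> 0 <= tent x <= 1.
Proof.
by move=> /andP[x0 x1]; case: (tent_cases x) => -[x_half ->]; apply/andP; split; lra.
Qed.

Definition tent_net : network R 1 1 :=
  NLayer (fun o : 'I_2 => if val o == 0%N then affine_neuron act_identity (fun _ => 1) 0
                          else affine_neuron act_relu (fun _ => 1) (- 2^-1))
         (NLast (fun _ : 'I_1 => affine_neuron act_identity
                   (fun i : 'I_2 => if val i == 0%N then 2 else -4) 0)).

Lemma tent_netE : net_map tent_net = tent.
Proof.
apply/funext => x; rewrite /net_map /= affine_neuronE !big_ord_recr !big_ord0 /=.
by rewrite !affine_neuronE !big_ord1 /= !mul1r /tent; ring.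
Qed.

Lemma iter_tent_dyadic n j : (j < 2 ^ n)%N -> exists s : bool, forall y,
  j%:R <= y * 2 ^+ n <= j%:R + 1 ->
  iter n tent y = if s then j%:R + 1 - y * 2 ^+ n else y * 2 ^+ n - j%:R.
Proof.
elim: n j => [|n IH] j.
  rewrite expn0 ltnS leqn0 => /eqP ->.
  by exists false => y _; rewrite expr0 mulr1 subr0.
have P0 : (0 : R) < 2 ^+ n by rewrite exprn_gt0.
rewrite exprS.
have [jn _|nj jn] := ltnP j (2 ^ n).
  have [s iterE] := IH j jn; exists s => y /andP[yj1 yj2].
  have jP : j%:R + 1 <= 2 ^+ n :> R by rewrite natr1 -natrX ler_nat.
  have y_le : y <= 2^-1 by rewrite -(ler_pM2r P0); lra.
  rewrite iterSr tent_le_half // iterE; first by case: s {iterE}; lra.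
  by apply/andP; split; lra.
pose j' := (2 ^ n.+1 - j.+1)%N.
have j'n : (j' < 2 ^ n)%N by rewrite /j' expnS; lia.
have j'E : j'%:R = 2 * 2 ^+ n - j%:R - 1 :> R.
  by rewrite /j' natrB // natrX exprS -[j.+1%:R]natr1 opprD addrA.
have [s iterE] := IH j' j'n; exists (~~ s) => y /andP[yj1 yj2].
have Pj : 2 ^+ n <= j%:R :> R by rewrite -natrX ler_nat.
have y_ge : 2^-1 <= y by rewrite -(ler_pM2r P0); lra.
rewrite iterSr tent_ge_half // iterE j'E; first by case: s {iterE} => /=; lra.
by apply/andP; split; lra.
Qed.

Lemma tent_itv_transitive01 : itv_transitive01 tent.
Proof.
move=> a b c d [a0 ab b1] [c0 cd d1].
have ba2 : 0 < (b - a) / 2 by rewrite divr_gt0 // subr_gt0.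
have [p _ /(_ p (leqnn p)) /= p_ba] := near_infty_natSinv_expn_lt (PosNum ba2).
have P0 : (0 : R) < 2 ^+ p by rewrite exprn_gt0.
have two_lt : 2 < b * 2 ^+ p - a * 2 ^+ p.
  by move: p_ba; rewrite -mulrBl ltr_pdivrMr // mulrAC ltr_pdivlMr // mul1r.
have a01 : 0 <= a <= 1 by rewrite a0 (le_trans (ltW ab) b1).
have [j _ /andP[ja aj]] := dyadic_cell p a01.
have b_le : b * 2 ^+ p <= 2 ^+ p by rewrite ler_piMl // ltW.
have jp : (j.+1 < 2 ^ p)%N by rewrite -(ltr_nat R) natrX -[j.+1%:R]natr1; lra.
have [s] := iter_tent_dyadic jp; rewrite -[j.+1%:R]natr1 => iterE.
have j0 : 0 <= j%:R :> R by [].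
have cell_sub u v : j%:R + 1 <= u -> u < v -> v <= j%:R + 2 ->
    (forall y, u <= y * 2 ^+ p <= v -> c <= iter p tent y <= d) ->
  exists a' b' m, [/\ subitv01 a' b', a <= a', b' <= b &
    forall y, a' <= y <= b' -> c <= iter m tent y <= d].
  move=> ju uv vj uvT; exists (u / 2 ^+ p), (v / 2 ^+ p), p; split.
  - split.
    + by rewrite divr_ge0 ?ltW //; lra.
    + by rewrite ltr_pM2r // invr_gt0.
    + by rewrite ler_pdivrMr // mul1r; lra.
  - by rewrite ler_pdivlMr //; lra.
  - by rewrite ler_pdivrMr //; lra.
  - by move=> y; rewrite ler_pdivrMr // ler_pdivlMr // => /uvT.
case: s iterE => iterE.
- apply: (cell_sub (j%:R + 2 - d) (j%:R + 2 - c)); try lra.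
  by move=> y /andP[y1 y2]; rewrite iterE; apply/andP; split; lra.
- apply: (cell_sub (j%:R + 1 + c) (j%:R + 1 + d)); try lra.
  by move=> y /andP[y1 y2]; rewrite iterE; apply/andP; split; lra.
Qed.

Local Notation lam := (@lebesgue_measure R).

Lemma tent_measurable : measurable_fun setT tent.
Proof.
rewrite (_ : tent = (cst 2 \* id) \- (cst 4 \* ((id \- cst 2^-1) \max cst 0))) //.
apply: measurable_funB; first exact: measurable_funM.
apply: measurable_funM => //; apply: measurable_maxr => //.
exact: measurable_funB.
Qed.

Lemma tent_preserves_rays (c : R) :
  lam (tent @^-1` `]-oo, c] `&` @I01 R) = lam (`]-oo, c] `&` @I01 R).
Proof.
rewrite /I01; have [c0|c0] := ltrP c 0.
  suff [-> ->] : tent @^-1` `]-oo, c] `&` `[0, 1] = set0 /\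
                 `]-oo, c] `&` `[0, 1] = set0 :> set R by [].
  split; apply/seteqP; split=> x //=; rewrite !in_itv /= => -[cx /andP[x0 x1]].
    by case: (tent_cases x) cx => -[xh ->]; lra.
  lra.
have [c1|c1] := ltrP c 1; last first.
  suff [-> ->] : tent @^-1` `]-oo, c] `&` `[0, 1] = `[0, 1]%classic /\
                 `]-oo, c] `&` `[0, 1] = `[0, 1]%classic :> set R by [].
  split; apply/seteqP; split=> x /=; rewrite !in_itv /=.
  - by case.
  - move=> /andP[x0 x1]; split; last by apply/andP.
    by case: (tent_cases x) => -[xh ->]; lra.
  - by case.
  - by move=> /andP[x0 x1]; split; [lra | apply/andP].
have -> : `]-oo, c] `&` `[0, 1] = `[0, c]%classic :> set R.
  apply/seteqP; split=> x /=; rewrite !in_itv /=.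
    by move=> [xc /andP[x0 x1]]; apply/andP.
  by move=> /andP[x0 xc]; split=> //; apply/andP; split; lra.
have -> : tent @^-1` `]-oo, c] `&` `[0, 1] =
          `[0, c / 2]%classic `|` `[1 - c / 2, 1]%classic :> set R.
  apply/seteqP; split=> x /=; rewrite !in_itv /=.
    move=> [cx /andP[x0 x1]].
    by case: (tent_cases x) cx => -[xh ->] cx; [left | right]; apply/andP; split; lra.
  by move=> [] /andP[x0 x1]; (split; [|apply/andP; split; lra]);
    case: (tent_cases x) => -[xh ->]; lra.
rewrite measureU //=; try exact: measurable_itv.
  have [c2_ge0 c2_le1] : 0 <= c / 2 /\ 1 - c / 2 <= 1 by split; lra.
  by rewrite !lebesgue_measure_itvcc // -EFinD; congr (_%:E); lra.
apply/seteqP; split=> x //=; rewrite !in_itv /= => -[/andP[x0 x1] /andP[x2 x3]].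
lra.
Qed.

Lemma tent_measure_preserving : measure_preserving01 tent.
Proof.
split; first exact: measurable_funS tent_measurable.
move=> A mA AI; rewrite setIC -[X in _ = lam X](setIidl AI).
apply: (measure_preimage_eq_on_rays (mu := mrestr lam (@I01_measurable R))) => //.
- exact: tent_measurable.
- exact: tent_preserves_rays.
- move=> c; rewrite /mrestr /= ge0_fin_numE //.
  apply: (@le_lt_trans _ _ (lam (@I01 R))).
    by apply: measureIr => //; exact: (@I01_measurable R).
  by rewrite /I01 lebesgue_measure_itvcc ?ltry.
Qed.

End tent.

Theorem lemma1 (R : realType) :
  exists (N : network R 1 1),
    let T := net_map N in
    (forall x : R, 0 <= x <= 1 -> 0 <= T x <= 1) /\
    measure_preserving01 T /\
    exists xi : R, 0 <= xi <= 1 /\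
      forall x : R, 0 <= x <= 1 -> forall eps : R, 0 < eps ->
        exists m : nat, `|x - iter m T xi| < eps.
Proof.
exists (@tent_net R); rewrite /= tent_netE; split; last split.
- exact: tent_itv01.
- exact: tent_measure_preserving.
- exact: itv_transitive01_dense_orbit (@tent_itv_transitive01 R).
Qed.
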